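(* Let $D$ be the derivation of the polynomial ring $\mathbb{Q}[\alpha,\beta][a,b,u_1,u_2,u_3,u_4]$ that is $\mathbb{Q}[\alpha,\beta]$-linear (so $D(\alpha)=D(\beta)=0$), satisfies the Leibniz rule $D(fg)=D(f)g+fD(g)$, and is given on generators by $$D(a)=\alpha a u_4,\quad D(b)=\beta b u_3,\quad D(u_4)=u_1u_2,\quad D(u_3)=u_1u_2,\quad D(u_1)=u_1u_3,\quad D(u_2)=u_2u_4.$$ Then for every $n\geq0$, $D^n(ab)=ab\,P_n(u_1,u_2,u_3,u_4\mid\alpha,\beta)$.
   Context: For $\sigma=\sigma_1\cdots\sigma_m\in\mathfrak S_m$: ${\rm LRmax}(\sigma)$ is the number of $i$ with $\sigma_j<\sigma_i$ for all $j<i$; ${\rm RLmax}(\sigma)$ is the number of $i$ with $\sigma_j<\sigma_i$ for all $j>i$. With the convention $\sigma_0=\sigma_{m+1}=0$: ${\rm W}(\sigma)$ is the number of $i\in[m]$ with $\sigma_{i-1}<\sigma_i>\sigma_{i+1}$; ${\rm V}(\sigma)$ is the number of $i$ with $1<i<m$ and $\sigma_{i-1}>\sigma_i<\sigma_{i+1}$; ${\rm rdd}(\sigma)$ is the number of $i$ with $1<i\le m$ and $\sigma_{i-1}>\sigma_i>\sigma_{i+1}$; ${\rm lda}(\sigma)$ is the number of $i$ with $1\le i<m$ and $\sigma_{i-1}<\sigma_i<\sigma_{i+1}$. Define $$P_n(u_1,u_2,u_3,u_4\mid\alpha,\beta)=\sum_{\sigma\in\mathfrak S_{n+1}}u_1^{{\rm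 V}(\sigma)}u_2^{{\rm W}(\sigma)-1}u_3^{{\rm rdd}(\sigma)}u_4^{{\rm lda}(\sigma)}\alpha^{{\rm LRmax}(\sigma)-1}\beta^{{\rm RLmax}(\sigma)-1}.$$ *)

From HB Require Import structures.
From mathcomp Require Import all_boot all_order all_algebra all_fingroup.
From mathcomp Require Import mpoly.
Set Implicit Arguments. Unset Strict Implicit. Unset Printing Implicit Defensive.
Import GRing.Theory.
Local Open Scope ring_scope.

(* The polynomial ring Q[alpha,beta][a,b,u1,u2,u3,u4], realised as
   Q[X_0..X_7] with X_0 = alpha, X_1 = beta, X_2 = a, X_3 = b,
   X_4 = u1, X_5 = u2, X_6 = u3, X_7 = u4. *)
Notation PR := {mpoly rat[8]}.
Definition valpha : PR := 'X_(@inord 7 0).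
Definition vbeta  : PR := 'X_(@inord 7 1).
Definition va     : PR := 'X_(@inord 7 2).
Definition vb     : PR := 'X_(@inord 7 3).
Definition vu1    : PR := 'X_(@inord 7 4).
Definition vu2    : PR := 'X_(@inord 7 5).
Definition vu3    : PR := 'X_(@inord 7 6).
Definition vu4    : PR := 'X_(@inord 7 7).

(* Values of a permutation s of [m] written with values 1..m, and the
   convention sigma_0 = sigma_{m+1} = 0 (positions outside 1..m give 0). *)
Definition sv (m : nat) (s : 'S_m) (i : nat) : nat :=
  if (0 < i)%N then
    (if @insub _ (fun k => k < m)%N 'I_m i.-1 is Some k then (s k : nat).+1 else 0%N)
  else 0%N.

Definition LRmax m (s : 'S_m) : nat :=
  count (fun i => all (fun j => sv s j < sv s i)%N (iota 1 i.-1)) (iota 1 m).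
Definition RLmax m (s : 'S_m) : nat :=
  count (fun i => all (fun j => sv s j < sv s i)%N (iota i.+1 (m - i))) (iota 1 m).
Definition Wst m (s : 'S_m) : nat :=
  count (fun i => (sv s i.-1 < sv s i)%N && (sv s i.+1 < sv s i)%N) (iota 1 m).
Definition Vst m (s : 'S_m) : nat :=
  count (fun i => (sv s i < sv s i.-1)%N && (sv s i < sv s i.+1)%N) (iota 2 (m - 2)).
Definition rdd m (s : 'S_m) : nat :=
  count (fun i => (sv s i < sv s i.-1)%N && (sv s i.+1 < sv s i)%N) (iota 2 (m - 1)).
Definition lda m (s : 'S_m) : nat :=
  count (fun i => (sv s i.-1 < sv s i)%N && (sv s i < sv s i.+1)%N) (iota 1 (m - 1)).

Definition Pn (n : nat) : PR :=
  \sum_(s : 'S_n.+1)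
     vu1 ^+ Vst s * vu2 ^+ (Wst s).-1 * vu3 ^+ rdd s * vu4 ^+ lda s
     * valpha ^+ (LRmax s).-1 * vbeta ^+ (RLmax s).-1.

From HB Require Import structures.
From mathcomp Require Import all_boot all_order all_algebra all_fingroup.
From mathcomp Require Import mpoly.
From mathcomp Require Import zify ring.
Set Implicit Arguments. Unset Strict Implicit. Unset Printing Implicit Defensive.

(* Every permutation of [1..m+1] is obtained exactly once by inserting the
   value 1 into one of the m+1 slots of a permutation of [2..m+1].  The new
   letter only changes the type (peak, valley, double ascent, double descent)
   of its two neighbours: in front it adds a double ascent and a left-to-right
   maximum, at the end a double descent and a right-to-left maximum; after a
   double ascent y it makes y a peak and itself a valley, after a valley y it
   makes y a double descent, and symmetrically on its right.  Since peaks =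
   valleys + 1 throughout, these moves multiply the weight
   u1^V u2^(W-1) u3^rdd u4^lda alpha^(LRmax-1) beta^(RLmax-1) exactly as
   alpha u4 + beta u3 + D does, so the weight sums S_m over permutations of
   [1..m] satisfy S_(m+1) = (alpha u4 + beta u3) S_m + D S_m.  This is also
   the recursion of D^n(ab) / ab, because D(ab) = ab (alpha u4 + beta u3). *)

(** * Words and insertion of the letter 1 *)

(* [letter w i] is the i-th letter of [w], counted from 1, padded with
   [letter w 0 = 0] and zeros beyond [size w]: the convention
   sigma_0 = sigma_{m+1} = 0 of the statistics. *)
Definition letter (w : seq nat) (i : nat) : nat := nth 0 (0 :: w) i.

Definition succ0 (x : nat) : nat := if x is 0 then 0 else x.+1.

Definition insert1 (j : nat) (l : seq nat) : seq nat := take j l ++ 1 :: drop j l.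

Lemma ltn_succ0 a b : (succ0 a < succ0 b) = (a < b).
Proof. by case: a; case: b. Qed.

Lemma succ0_gt1 a : (1 < succ0 a) = (0 < a).
Proof. by case: a. Qed.

Lemma succ0_lt1 a : (succ0 a < 1) = (a == 0).
Proof. by case: a. Qed.

Lemma nth_map_succ (w : seq nat) k : 0 \notin w -> nth 0 (map S w) k = succ0 (nth 0 w k).
Proof.
move=> w0; case: (ltnP k (size w)) => hk; last by rewrite !nth_default ?size_map.
rewrite (nth_map 0) //; case E: (nth 0 w k) => [|x] //.
by move: w0; rewrite -E mem_nth.
Qed.

Lemma size_insert1 j l : j <= size l -> size (insert1 j l) = (size l).+1.
Proof. by move=> hj; rewrite /insert1 size_cat /= size_takel // size_drop; lia. Qed.

Lemma letter_insert1 (w : seq nat) j i : 0 \notin w -> j <= size w ->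
  letter (insert1 j (map S w)) i =
  if i <= j then succ0 (letter w i) else if i == j.+1 then 1 else succ0 (letter w i.-1).
Proof.
move=> w0 hj; rewrite /letter /insert1; case: i => [|i] //=.
rewrite nth_cat size_takel ?size_map //.
case: (ltnP i j) => hij; first by rewrite nth_take // nth_map_succ // ifT.
case: (eqVneq i j) => [->|hne]; first by rewrite subnn eqxx.
rewrite ifF; last by apply/negbTE; rewrite eqSS.
have -> : i - j = (i - j).-1.+1 by lia.
rewrite /= nth_drop nth_map_succ //.
case: i hij hne => [|i] hij hne /=; first by lia.
by congr (succ0 (nth 0 w _)); lia.
Qed.

Lemma letter_gt0 (w : seq nat) i : 0 \notin w -> 0 < i <= size w -> 0 < letter w i.
Proof.
move=> w0; case: i => [|i] //= hi; rewrite /letter /=.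
case E: (nth 0 w i) => //.
by move: w0; rewrite -E mem_nth.
Qed.

Lemma letter_oversize (w : seq nat) i : size w < i -> letter w i = 0.
Proof. by case: i => [|i] //= hi; rewrite /letter /= nth_default. Qed.

Lemma letter_gt0_range (w : seq nat) i : 0 < letter w i -> 0 < i <= size w.
Proof.
case: i => [|i] //; case: (ltnP (size w) i.+1) => h; last by lia.
by rewrite letter_oversize.
Qed.

Lemma letter_eq0 (w : seq nat) i : 0 \notin w -> (letter w i == 0) = (i == 0) || (size w < i).
Proof.
move=> w0; case: (ltnP (size w) i) => h; first by rewrite letter_oversize // orbT.
case: i h => [|i] h //=.
by apply/negbTE; rewrite -lt0n letter_gt0.
Qed.

Lemma letter_inj (w : seq nat) a b : uniq w -> 0 < letter w a -> 0 < letter w b ->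
  letter w a = letter w b -> a = b.
Proof.
move=> wu /letter_gt0_range + /letter_gt0_range.
case: a => [|a] //; case: b => [|b] //= ha hb.
by rewrite /letter /= => /eqP; rewrite nth_uniq // => /eqP ->.
Qed.

Lemma letter_insert1_le (w : seq nat) j i : 0 \notin w -> j <= size w -> i <= j ->
  letter (insert1 j (map S w)) i = succ0 (letter w i).
Proof. by move=> w0 hj hi; rewrite letter_insert1 // hi. Qed.

Lemma letter_insert1_new (w : seq nat) j : 0 \notin w -> j <= size w ->
  letter (insert1 j (map S w)) j.+1 = 1.
Proof. by move=> w0 hj; rewrite letter_insert1 // ltnn eqxx. Qed.

Lemma letter_insert1_gt (w : seq nat) j i : 0 \notin w -> j <= size w -> j.+1 < i ->
  letter (insert1 j (map S w)) i = succ0 (letter w i.-1).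
Proof.
by move=> w0 hj hi; rewrite letter_insert1 // ifF ?ifF //; lia.
Qed.

Definition window_count (Q : nat -> nat -> nat -> bool) w n :=
  count (fun i => Q (letter w i.-1) (letter w i) (letter w i.+1)) (iota 0 n).

Definition succ0_invariant (Q : nat -> nat -> nat -> bool) :=
  forall a b c, Q (succ0 a) (succ0 b) (succ0 c) = Q a b c.

(* Only the windows centred at [y], at the new letter and at [z] change. *)
Lemma window_count_insert1 Q (w : seq nat) j : succ0_invariant Q -> 0 \notin w ->
  j <= size w ->
  let x := letter w j.-1 in let y := letter w j in
  let z := letter w j.+1 in let t := letter w j.+2 in
  window_count Q (insert1 j (map S w)) (size w).+3 + Q x y z + Q y z t =
  window_count Q w (size w).+2 + Q (succ0 x) (succ0 y) 1
    + Q (succ0 y) 1 (succ0 z) + Q 1 (succ0 z) (succ0 t).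
Proof.
move=> hQ w0 hj x y z t; rewrite /window_count.
set w' := insert1 j (map S w).
have lo i : i <= j -> letter w' i = succ0 (letter w i) by exact: letter_insert1_le.
have hi i : j.+1 < i -> letter w' i = succ0 (letter w i.-1) by exact: letter_insert1_gt.
have e1 : (size w).+3 = j + (3 + (size w - j)) by lia.
have e2 : (size w).+2 = j + (2 + (size w - j)) by lia.
rewrite e1 e2 !iotaD !count_cat !add0n.
have -> : count (fun i => Q (letter w' i.-1) (letter w' i) (letter w' i.+1)) (iota 0 j) =
          count (fun i => Q (letter w i.-1) (letter w i) (letter w i.+1)) (iota 0 j).
  apply: eq_in_count => i; rewrite mem_iota => /andP [_ hij].
  by rewrite !lo //; lia.
have -> : count (fun i => Q (letter w' i.-1) (letter w' i) (letter w' i.+1))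
            (iota (j + 3) (size w - j)) =
          count (fun i => Q (letter w i.-1) (letter w i) (letter w i.+1))
            (iota (j + 2) (size w - j)).
  rewrite (_ : j + 3 = 1 + (j + 2)); last by lia.
  rewrite (iotaDl 1 (j + 2)) count_map.
  apply: eq_in_count => i; rewrite mem_iota => /andP [hij _] /=.
  rewrite !hi ?hQ; try lia.
  by congr (Q (letter w _) (letter w _) (letter w _)); lia.
rewrite /= (lo j.-1) ?leq_pred // (lo j) // letter_insert1_new //.
rewrite (hi j.+2) // (hi j.+3) //= !addn0 /x /y /z /t; lia.
Qed.

Definition lrmaxima (w : seq nat) :=
  count (fun i => all (fun k => letter w k < letter w i) (iota 1 i.-1)) (iota 1 (size w)).
Definition rlmaxima (w : seq nat) :=
  count (fun i => all (fun k => letter w k < letter w i) (iota i.+1 (size w - i)))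
    (iota 1 (size w)).

Lemma iota_split a j n : j <= n -> iota a n = iota a j ++ iota (a + j) (n - j).
Proof. by move=> h; rewrite -iotaD subnKC. Qed.

(* Positions before the new letter keep their status, positions after it are
   shifted by one and see the extra letter 1, which is smaller than all
   others; the new letter is a left-to-right maximum only in front. *)
Lemma lrmaxima_insert1 (w : seq nat) j : 0 \notin w -> j <= size w ->
  lrmaxima (insert1 j (map S w)) = lrmaxima w + (j == 0).
Proof.
move=> w0 hj; rewrite /lrmaxima size_insert1 ?size_map //.
set w' := insert1 j (map S w).
have lo i : i <= j -> letter w' i = succ0 (letter w i) by exact: letter_insert1_le.
have hi i : j.+1 < i -> letter w' i = succ0 (letter w i.-1) by exact: letter_insert1_gt.
have new : letter w' j.+1 = 1 by exact: letter_insert1_new.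
rewrite (iota_split 1 (_ : j <= (size w).+1)) ?(iota_split 1 hj); last by lia.
rewrite subSn // add1n /= !count_cat /= (iotaDl 1 j.+1) count_map.
rewrite -addnA [_ + (j == 0)]addnC; congr (_ + (_ + _)).
- apply: eq_in_count => i; rewrite mem_iota => /andP [hi1 hi2].
  apply: eq_in_all => k; rewrite mem_iota => /andP [hk1 hk2].
  by rewrite !lo ?ltn_succ0 //; lia.
- rewrite new; case: (posnP j) => [-> //|jp].
  rewrite (_ : all _ _ = false) //; apply: negbTE; apply/allPn; exists 1.
    by rewrite mem_iota; lia.
  by rewrite lo // succ0_lt1 letter_eq0 //; lia.
apply: eq_in_count => i; rewrite mem_iota => /andP [hi1 hi2] /=.
rewrite (iota_split 1 (_ : j <= i)); last by lia.
rewrite (iota_split 1 (_ : j <= i.-1)); last by lia.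
rewrite (_ : i - j = (i.-1 - j).+1); last by lia.
rewrite [iota (1 + j) _.+1]/= -[(1 + j).+1]add1n (iotaDl 1 (1 + j)) !all_cat /= all_map.
have yi : 0 < letter w i by apply: letter_gt0 => //; lia.
rewrite !add1n /= new hi // succ0_gt1 yi /=.
congr andb; apply: eq_in_all => k; rewrite mem_iota => /andP [hk1 hk2] /=.
  by rewrite lo ?ltn_succ0 //; lia.
by rewrite hi ?ltn_succ0 //; lia.
Qed.

Lemma rlmaxima_insert1 (w : seq nat) j : 0 \notin w -> j <= size w ->
  rlmaxima (insert1 j (map S w)) = rlmaxima w + (j == size w).
Proof.
move=> w0 hj; rewrite /rlmaxima size_insert1 ?size_map //.
set w' := insert1 j (map S w).
have lo i : i <= j -> letter w' i = succ0 (letter w i) by exact: letter_insert1_le.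
have hi i : j.+1 < i -> letter w' i = succ0 (letter w i.-1) by exact: letter_insert1_gt.
have new : letter w' j.+1 = 1 by exact: letter_insert1_new.
rewrite (iota_split 1 (_ : j <= (size w).+1)) ?(iota_split 1 hj); last by lia.
rewrite subSn // add1n /= !count_cat /= (iotaDl 1 j.+1) count_map.
rewrite -addnA [_ + (j == size w)]addnC; congr (_ + (_ + _)).
- apply: eq_in_count => i; rewrite mem_iota => /andP [hi1 hi2].
  have yi : 0 < letter w i by apply: letter_gt0 => //; lia.
  rewrite (iota_split i.+1 (_ : j - i <= (size w).+1 - i)); last by lia.
  rewrite (iota_split i.+1 (_ : j - i <= size w - i)); last by lia.
  rewrite (_ : i.+1 + (j - i) = j.+1); last by lia.
  rewrite (_ : (size w).+1 - i - (j - i) = (size w - j).+1); last by lia.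
  rewrite (_ : size w - i - (j - i) = size w - j); last by lia.
  rewrite /= (iotaDl 1 j.+1) !all_cat /= all_map.
  rewrite new lo // succ0_gt1 yi /=.
  congr andb; apply: eq_in_all => k; rewrite mem_iota => /andP [hk1 hk2] /=.
    by rewrite !lo ?ltn_succ0 //; lia.
  by rewrite hi ?lo ?ltn_succ0 //; lia.
- rewrite new; case: (ltngtP j (size w)) => [jlt||->]; try lia; last by rewrite subnn.
  rewrite (_ : all _ _ = false) //; apply: negbTE; apply/allPn; exists j.+2.
    by apply/mapP; exists j.+1 => //; rewrite mem_iota; lia.
  by rewrite hi // succ0_lt1 letter_eq0 //; lia.
apply: eq_in_count => i; rewrite mem_iota => /andP [hi1 hi2] /=.
rewrite (_ : (size w).+1 - (1 + i) = size w - i); last by lia.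
rewrite (_ : (1 + i).+1 = 1 + i.+1) // (iotaDl 1 i.+1) all_map.
apply: eq_in_all => k; rewrite mem_iota => /andP [hk1 hk2] /=.
by rewrite !hi ?ltn_succ0 //; lia.
Qed.

Definition peak3 x y z := (x < y) && (z < y).
Definition valley3 x y z := (y < x) && (y < z).
Definition ddesc3 x y z := (y < x) && (z < y).
Definition dasc3 x y z := (x < y) && (y < z).

Lemma peak3_succ0 : succ0_invariant peak3.
Proof. by move=> a b c; rewrite /peak3 !ltn_succ0. Qed.
Lemma valley3_succ0 : succ0_invariant valley3.
Proof. by move=> a b c; rewrite /valley3 !ltn_succ0. Qed.
Lemma ddesc3_succ0 : succ0_invariant ddesc3.
Proof. by move=> a b c; rewrite /ddesc3 !ltn_succ0. Qed.
Lemma dasc3_succ0 : succ0_invariant dasc3.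
Proof. by move=> a b c; rewrite /dasc3 !ltn_succ0. Qed.

Definition peaks w := window_count peak3 w (size w).+2.
Definition valleys w := window_count valley3 w (size w).+2.
Definition ddescents w := window_count ddesc3 w (size w).+2.
Definition dascents w := window_count dasc3 w (size w).+2.

Section Insert1.
Variables (w : seq nat) (j : nat).
Hypotheses (w_uniq : uniq w) (w0 : 0 \notin w) (w_gt0 : 0 < size w) (hj : j <= size w).
Let x := letter w j.-1.
Let y := letter w j.
Let z := letter w j.+1.
Let t := letter w j.+2.
Let w' := insert1 j (map S w).

(* The new letter 1 sits between [y] and [z]; at either end of the word it
   forms a double ascent [0 < 1 < z] or a double descent [y > 1 > 0]. *)
Lemma insert1_stats :
  (j == 0) + (j == size w) + dasc3 x y z + valley3 x y z + ddesc3 y z t + valley3 y z t = 1 /\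
  valleys w' = valleys w + dasc3 x y z + ddesc3 y z t /\
  peaks w' = peaks w + dasc3 x y z + ddesc3 y z t /\
  ddescents w' + ddesc3 y z t = ddescents w + valley3 x y z + (j == size w) /\
  dascents w' + dasc3 x y z = dascents w + valley3 y z t + (j == 0).
Proof.
have sw' : size w' = (size w).+1 by rewrite size_insert1 ?size_map.
have x_eq0 : (x == 0) = (j <= 1) by rewrite letter_eq0 //; lia.
have y_eq0 : (y == 0) = (j == 0) by rewrite letter_eq0 //; lia.
have z_eq0 : (z == 0) = (j == size w) by rewrite letter_eq0 //; lia.
have t_eq0 : (t == 0) = (size w <= j.+1) by rewrite letter_eq0 //; lia.
have letter_neq a b : 0 < letter w a -> 0 < letter w b -> a <> b -> letter w a <> letter w b.
  by move=> ha hb ab /(letter_inj w_uniq ha hb).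
have x_neq_y : 0 < x -> 0 < y -> x <> y.
  move=> hx hy; have /andP [? ?] := letter_gt0_range hx.
  by apply: letter_neq => //; lia.
have y_neq_z : 0 < y -> 0 < z -> y <> z by move=> ??; apply: letter_neq => //; lia.
have z_neq_t : 0 < z -> 0 < t -> z <> t by move=> ??; apply: letter_neq => //; lia.
rewrite /valleys /peaks /ddescents /dascents sw'.
have := window_count_insert1 valley3_succ0 w0 hj.
have := window_count_insert1 peak3_succ0 w0 hj.
have := window_count_insert1 ddesc3_succ0 w0 hj.
have := window_count_insert1 dasc3_succ0 w0 hj.
rewrite -/x -/y -/z -/t -/w' /valley3 /peak3 /ddesc3 /dasc3 !ltn_succ0 !succ0_gt1 !succ0_lt1.
clearbody x y z t w'.
case: (posnP y) y_eq0 => [-> /esym/eqP j0|ypos y_eq0];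
  case: (posnP z) z_eq0 => [-> /esym/eqP js|zpos z_eq0].
- by exfalso; lia.
- have x0 : x = 0 by apply/eqP; rewrite x_eq0; lia.
  rewrite x0 j0 /= (_ : 0 == size w = false) ?ltn0 /= ?andbF; last by lia.
  lia.
- have t0 : t = 0 by apply/eqP; rewrite t_eq0; lia.
  rewrite t0 js eqxx /= (_ : size w == 0 = false) ?ltn0 /= ?andbF; last by lia.
  lia.
have -> : (j == 0) = false by rewrite -y_eq0; lia.
have -> : (j == size w) = false by rewrite -z_eq0; lia.
case: (ltngtP y z) (y_neq_z ypos zpos) => // _ _.
- by case: (ltngtP x y) => //=; lia.
by case: (ltngtP z t) => //=; lia.
Qed.
End Insert1.

Lemma lrmaxima_gt0 (w : seq nat) : 0 < size w -> 0 < lrmaxima w.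
Proof. by rewrite /lrmaxima; case: (size w) => [|n] //= _; rewrite add1n. Qed.

Lemma rlmaxima_gt0 (w : seq nat) : 0 < size w -> 0 < rlmaxima w.
Proof.
move=> h; rewrite /rlmaxima -has_count; apply/hasP; exists (size w).
  by rewrite mem_iota; lia.
by rewrite subnn.
Qed.

(** * Permutations as words built by inserting the minimum *)

Fixpoint perm_words (m : nat) : seq (seq nat) :=
  if m is m'.+1 then [seq insert1 j (map S w) | w <- perm_words m', j <- iota 0 m]
  else [:: [::]].

Lemma perm_wordsS m :
  perm_words m.+1 = [seq insert1 j (map S w) | w <- perm_words m, j <- iota 0 m.+1].
Proof. by []. Qed.

Lemma size_perm_words m : size (perm_words m) = m`!.
Proof. by elim: m => [|m IH] //; rewrite perm_wordsS size_allpairs IH size_iota factS mulnC. Qed.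

Lemma perm_insert1 j (l : seq nat) : perm_eq (insert1 j l) (1 :: l).
Proof. by rewrite /insert1 -cat1s perm_catCA /= perm_cons cat_take_drop. Qed.

Lemma index_insert1 j (l : seq nat) : 1 \notin l -> j <= size l -> index 1 (insert1 j l) = j.
Proof.
move=> l1 hj; rewrite /insert1 index_cat.
have -> : (1 \in take j l) = false by apply/negbTE; apply: contra l1; apply: mem_take.
by rewrite index_head addn0 size_takel.
Qed.

Lemma rem_insert1 j (l : seq nat) : 1 \notin l -> rem 1 (insert1 j l) = l.
Proof.
move=> l1; rewrite /insert1 remE index_cat.
have -> : (1 \in take j l) = false by apply/negbTE; apply: contra l1; apply: mem_take.
rewrite index_head addn0 take_cat ltnn subnn take0 cats0.
by rewrite drop_cat ltnNge leqnSn /= subSn // subnn /= drop0 cat_take_drop.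
Qed.

Lemma insert1_rem (w : seq nat) : 1 \in w -> insert1 (index 1 w) (rem 1 w) = w.
Proof.
move=> w1; set j := index 1 w.
have hj : j < size w by rewrite index_mem.
have hs : size (take j w) = j by rewrite size_takel // ltnW.
rewrite /insert1 remE -/j take_cat hs ltnn subnn take0 cats0.
rewrite drop_cat hs ltnn subnn drop0.
by rewrite -(nth_index 0 w1) -/j -drop_nth // cat_take_drop.
Qed.

Lemma map_succ_iota a n : map S (iota a n) = iota a.+1 n.
Proof. by rewrite (iotaDl 1). Qed.

Lemma perm_iotaP m (w : seq nat) : perm_eq w (iota 1 m) ->
  [/\ uniq w, 0 \notin w & size w = m].
Proof.
move=> h; split.
- by rewrite (perm_uniq h) iota_uniq.
- by rewrite (perm_mem h) mem_iota.
- by rewrite (perm_size h) size_iota.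
Qed.

Lemma mem_perm_words m (w : seq nat) : (w \in perm_words m) = perm_eq w (iota 1 m).
Proof.
elim: m w => [|m IH] w.
  by rewrite inE; apply/eqP/idP => [-> //|/perm_size/size0nil].
rewrite perm_wordsS; apply/allpairsP/idP => [[[w0 j] /= [hw0 _ ->]]|hw].
  apply: perm_trans (perm_insert1 _ _) _.
  by rewrite perm_cons -map_succ_iota perm_map // -IH.
have w1 : 1 \in w by rewrite (perm_mem hw) mem_iota.
have hr : perm_eq (rem 1 w) (iota 2 m).
  by rewrite -(perm_cons 1); apply: perm_trans _ hw; rewrite perm_sym perm_to_rem.
exists (map predn (rem 1 w), index 1 w); split.
- rewrite IH (_ : iota 1 m = map predn (iota 2 m)); first exact: perm_map.
  by rewrite -(map_succ_iota 1) -map_comp map_id.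
- by rewrite mem_iota add0n -(size_iota 1 m.+1) -(perm_size hw) index_mem.
rewrite /= -map_comp (map_id_in (s := rem 1 w)) ?insert1_rem // => k.
by rewrite (perm_mem hr) mem_iota => /andP [hk _] /=; case: k hk.
Qed.

Lemma perm_words_uniq m : uniq (perm_words m).
Proof.
elim: m => [|m IH] //; rewrite perm_wordsS.
apply: allpairs_uniq => //; first exact: iota_uniq.
move=> [w1 j1] [w2 j2] /allpairsP [[a b] [ha hb [-> ->]]] /allpairsP [[c d] [hc hd [-> ->]]] /= e.
move: ha hc hb hd; rewrite !mem_perm_words !mem_iota !add0n /= !ltnS => ha hc hb hd.
have [_ a0 sa] := perm_iotaP ha; have [_ c0 sc] := perm_iotaP hc.
have S1 u : 0 \notin u -> 1 \notin map S u.
  by move=> u0; apply/mapP => [[k hk [ek]]]; move: u0; rewrite ek hk.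
rewrite -{1}sa -(size_map S a) in hb; rewrite -sc -(size_map S c) in hd.
have ebd : b = d by rewrite -(index_insert1 (S1 _ a0) hb) e index_insert1 // S1.
subst d; congr pair.
by apply: (inj_map succn_inj); rewrite -(rem_insert1 b (S1 _ a0)) e rem_insert1 // S1.
Qed.

Lemma peaks_perm_words m w : w \in perm_words m.+1 -> peaks w = (valleys w).+1.
Proof.
elim: m w => [|m IH] w; first by rewrite inE => /eqP ->.
rewrite perm_wordsS => /allpairsP [[u j] [hu hj ->]] /=.
rewrite mem_perm_words in hu; have [u_uniq u0 su] := perm_iotaP hu.
move: hj; rewrite mem_iota -su => /andP [_ hj].
have u_gt0 : 0 < size u by rewrite su.
have [_ [-> [-> _]]] := insert1_stats u_uniq u0 u_gt0 hj.
by rewrite IH ?mem_perm_words // !addSn.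
Qed.

Definition perm_word m (s : 'S_m) : seq nat := [seq (s i).+1 | i <- enum 'I_m].

Lemma size_perm_word m (s : 'S_m) : size (perm_word s) = m.
Proof. by rewrite /perm_word size_map size_enum_ord. Qed.

Lemma sv_perm_word m (s : 'S_m) i : sv s i = letter (perm_word s) i.
Proof.
rewrite /sv /letter; case: i => [|i] //=.
case: insubP => [k hk ek|hk].
  by rewrite -ek (nth_map k) ?size_enum_ord ?ltn_ord // nth_ord_enum.
by rewrite nth_default // size_perm_word leqNgt.
Qed.

Lemma perm_word_iota m (s : 'S_m) : perm_eq (perm_word s) (iota 1 m).
Proof.
rewrite /perm_word (map_comp S (val \o s)) map_comp -map_succ_iota -val_enum_ord.
apply/perm_map/perm_map/uniq_perm => [||x]; rewrite ?enum_uniq //.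
  by rewrite map_inj_uniq ?enum_uniq //; exact: perm_inj.
rewrite mem_enum; apply/mapP; exists (s^-1 x)%g; first by rewrite mem_enum.
by rewrite permKV.
Qed.

Lemma perm_word_inj m : injective (@perm_word m).
Proof.
move=> s t /eq_in_map e; apply/permP => i.
by apply: val_inj; apply/succn_inj; apply: e; rewrite mem_enum.
Qed.

Lemma big_perm_words (R : Type) (idx : R) (op : Monoid.com_law idx) m
    (F : seq nat -> R) :
  \big[op/idx]_(s : 'S_m) F (perm_word s) = \big[op/idx]_(w <- perm_words m) F w.
Proof.
rewrite -(big_map (@perm_word m) xpredT F); apply: perm_big.
have uniq_words : uniq (map (@perm_word m) (index_enum {perm 'I_m})).
  by rewrite map_inj_uniq ?index_enum_uniq //; exact: perm_word_inj.
apply: uniq_perm => //; first exact: perm_words_uniq.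
have sub : {subset map (@perm_word m) (index_enum {perm 'I_m}) <= perm_words m}.
  by move=> w /mapP [s _ ->]; rewrite mem_perm_words perm_word_iota.
have sz : size (perm_words m) <= size (map (@perm_word m) (index_enum {perm 'I_m})).
  by rewrite size_map size_perm_words -card_Sn cardT enumT.
by have [] := uniq_min_size uniq_words sub sz.
Qed.

Lemma count_iota_window (P : pred nat) a n N : a + n <= N ->
  (forall i, P i -> a <= i < a + n) -> count P (iota 0 N) = count P (iota a n).
Proof.
move=> hN hP.
rewrite (iota_split 0 (_ : a <= N)); last by lia.
rewrite (iota_split (0 + a) (_ : n <= N - a)); last by lia.
rewrite !count_cat add0n.
have none b k : (forall i, P i -> ~~ (b <= i < b + k)) -> count P (iota b k) = 0.
  move=> hb; apply/eqP; rewrite -leqn0 leqNgt -has_count; apply/hasP => [[i]].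
  by rewrite mem_iota => hi /hb; rewrite hi.
rewrite (none 0 a) ?(none (0 + a + n)) ?addn0 // => i /hP; lia.
Qed.

Section PermWordStats.
Variables (m : nat) (s : 'S_m).
Let w := perm_word s.

Lemma letter_perm_word_range i : 0 < letter w i -> 0 < i <= m.
Proof. by rewrite -(size_perm_word s); exact: letter_gt0_range. Qed.

Lemma Vst_perm_word : Vst s = valleys w.
Proof.
rewrite /Vst /valleys /window_count size_perm_word /valley3.
under eq_count => i do rewrite !sv_perm_word.
apply/esym/count_iota_window => [|i /andP [h1 h2]]; first by lia.
have := letter_perm_word_range (leq_ltn_trans (leq0n _) h1).
have := letter_perm_word_range (leq_ltn_trans (leq0n _) h2).
by case: i {h1 h2} => [|[|i]] //=; lia.
Qed.

Lemma Wst_perm_word : Wst s = peaks w.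
Proof.
rewrite /Wst /peaks /window_count size_perm_word /peak3.
under eq_count => i do rewrite !sv_perm_word.
apply/esym/count_iota_window => [|i /andP [h1 _]]; first by lia.
by have := letter_perm_word_range (leq_ltn_trans (leq0n _) h1); lia.
Qed.

Lemma rdd_perm_word : rdd s = ddescents w.
Proof.
rewrite /rdd /ddescents /window_count size_perm_word /ddesc3.
under eq_count => i do rewrite !sv_perm_word.
apply/esym/count_iota_window => [|i /andP [h1 h2]]; first by lia.
have := letter_perm_word_range (leq_ltn_trans (leq0n _) h1).
have := letter_perm_word_range (leq_ltn_trans (leq0n _) h2).
by case: i {h1 h2} => [|[|i]] //=; lia.
Qed.

Lemma lda_perm_word : lda s = dascents w.
Proof.
rewrite /lda /dascents /window_count size_perm_word /dasc3.
under eq_count => i do rewrite !sv_perm_word.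
apply/esym/count_iota_window => [|i /andP [h1 h2]]; first by lia.
have := letter_perm_word_range (leq_ltn_trans (leq0n _) h1).
have := letter_perm_word_range (leq_ltn_trans (leq0n _) h2).
by case: i {h1 h2} => [|i] //=; lia.
Qed.

Lemma LRmax_perm_word : LRmax s = lrmaxima w.
Proof.
rewrite /LRmax /lrmaxima size_perm_word.
by apply: eq_count => i; apply: eq_all => k; rewrite !sv_perm_word.
Qed.

Lemma RLmax_perm_word : RLmax s = rlmaxima w.
Proof.
rewrite /RLmax /rlmaxima size_perm_word.
by apply: eq_count => i; apply: eq_all => k; rewrite !sv_perm_word.
Qed.

End PermWordStats.

Lemma count_iotaSr (P : pred nat) m : ~~ P m.+1 ->
  count P (iota 0 m.+2) = count P (iota 0 m.+1).
Proof. by move=> Pm; rewrite -addn1 iotaD count_cat /= (negbTE Pm) !addn0. Qed.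

Lemma count_iotaSl (P : pred nat) m : ~~ P 0 ->
  count P (iota 0 m.+2) = count (fun j => P j.+1) (iota 0 m.+1).
Proof. by move=> P0; rewrite /= (negbTE P0) add0n -map_succ_iota count_map. Qed.

Import GRing.Theory.
Local Open Scope ring_scope.

Definition umono (a b c d e f : nat) : PR :=
  vu1 ^+ a * vu2 ^+ b * vu3 ^+ c * vu4 ^+ d * valpha ^+ e * vbeta ^+ f.

Definition weight (w : seq nat) : PR :=
  umono (valleys w) (peaks w).-1 (ddescents w) (dascents w) (lrmaxima w).-1 (rlmaxima w).-1.

Lemma umono_congr a b c d e f a' b' c' d' e' f' :
  a = a' -> b = b' -> c = c' -> d = d' -> e = e' -> f = f' ->
  umono a b c d e f = umono a' b' c' d' e' f'.
Proof. by move=> -> -> -> -> -> ->. Qed.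

Lemma umono_u3 a b c d e f : vu3 * umono a b c d e f = umono a b c.+1 d e f.
Proof. by rewrite /umono exprS; ring. Qed.
Lemma umono_u4 a b c d e f : vu4 * umono a b c d e f = umono a b c d.+1 e f.
Proof. by rewrite /umono exprS; ring. Qed.
Lemma umono_alpha a b c d e f : valpha * umono a b c d e f = umono a b c d e.+1 f.
Proof. by rewrite /umono exprS; ring. Qed.
Lemma umono_beta a b c d e f : vbeta * umono a b c d e f = umono a b c d e f.+1.
Proof. by rewrite /umono exprS; ring. Qed.

Lemma sumr_count (R : pzSemiRingType) (T : Type) (s : seq T) (P : pred T) (c : R) :
  \sum_(j <- s) (P j)%:R * c = (count P s)%:R * c.
Proof. by elim: s => [|a s IH]; rewrite ?big_nil ?mul0r // big_cons IH /= natrD mulrDl. Qed.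

Section WeightInsert1.
Variable w : seq nat.
Hypotheses (w_uniq : uniq w) (w0 : 0 \notin w) (w_gt0 : (0 < size w)%N)
           (hpv : peaks w = (valleys w).+1).
Let V := valleys w.
Let r := ddescents w.
Let l := dascents w.
Let LR := lrmaxima w.
Let RL := rlmaxima w.

Lemma weight_insert1 j : (j <= size w)%N ->
  let x := letter w j.-1 in let y := letter w j in
  let z := letter w j.+1 in let t := letter w j.+2 in
  weight (insert1 j (map S w)) =
      (j == 0)%:R * umono V V r l.+1 LR RL.-1
    + (j == size w)%:R * umono V V r.+1 l LR.-1 RL
    + (dasc3 x y z)%:R * umono V.+1 V.+1 r l.-1 LR.-1 RL.-1
    + (valley3 x y z)%:R * umono V V r.+1 l LR.-1 RL.-1
    + (ddesc3 y z t)%:R * umono V.+1 V.+1 r.-1 l LR.-1 RL.-1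
    + (valley3 y z t)%:R * umono V V r l.+1 LR.-1 RL.-1.
Proof.
move=> hj x y z t.
have [one [eV [eW [er el]]]] := insert1_stats w_uniq w0 w_gt0 hj.
have eLR := lrmaxima_insert1 w0 hj; have eRL := rlmaxima_insert1 w0 hj.
have LR_gt0 := lrmaxima_gt0 w_gt0; have RL_gt0 := rlmaxima_gt0 w_gt0.
rewrite /weight eLR eRL eW hpv; rewrite -/x -/y -/z -/t -/V -/r -/l -/LR -/RL in one eV er el *.
move: one eV er el; clearbody x y z t V r l LR RL.
case: (j == 0); case: (j == size w); case: (dasc3 x y z); case: (valley3 x y z);
  case: (ddesc3 y z t); case: (valley3 y z t) => //= _ eV er el;
  rewrite ?mul0r ?mul1r ?add0r ?addr0; apply: umono_congr; lia.
Qed.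

Lemma sum_weight_insert1 :
  \sum_(j <- iota 0 (size w).+1) weight (insert1 j (map S w)) =
      umono V V r l.+1 LR RL.-1 + umono V V r.+1 l LR.-1 RL
    + l%:R * umono V.+1 V.+1 r l.-1 LR.-1 RL.-1 + V%:R * umono V V r.+1 l LR.-1 RL.-1
    + r%:R * umono V.+1 V.+1 r.-1 l LR.-1 RL.-1 + V%:R * umono V V r l.+1 LR.-1 RL.-1.
Proof.
under eq_big_seq => j.
  rewrite mem_iota ltnS => /andP [_ hj].
  rewrite weight_insert1 //.
  over.
rewrite !big_split !sumr_count.
rewrite (count_uniq_mem 0 (iota_uniq _ _)) (count_uniq_mem (size w) (iota_uniq _ _)) !mem_iota.
have out k : (size w < k)%N -> letter w k = 0%N by exact: letter_oversize.
have -> : count (fun j => dasc3 (letter w j.-1) (letter w j) (letter w j.+1))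
            (iota 0 (size w).+1) = l.
  by rewrite /l /dascents /window_count count_iotaSr // /dasc3 (out (size w).+1) // ltn0.
have -> : count (fun j => valley3 (letter w j.-1) (letter w j) (letter w j.+1))
            (iota 0 (size w).+1) = V.
  rewrite /V /valleys /window_count count_iotaSr // /valley3.
  by rewrite (out (size w).+1) ?(out (size w).+2) //= andbF.
have -> : count (fun j => ddesc3 (letter w j) (letter w j.+1) (letter w j.+2))
            (iota 0 (size w).+1) = r.
  by rewrite /r /ddescents /window_count count_iotaSl.
have -> : count (fun j => valley3 (letter w j) (letter w j.+1) (letter w j.+2))
            (iota 0 (size w).+1) = V.
  by rewrite /V /valleys /window_count count_iotaSl.
by rewrite /= leqnn !mul1r.
Qed.

End WeightInsert1.

(** * Derivations *)

Section Derivation.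
Variables (R : comNzRingType) (D : R -> R).
Hypotheses (derD : forall p q, D (p + q) = D p + D q)
           (derM : forall p q, D (p * q) = D p * q + p * D q).

Lemma der0 : D 0 = 0.
Proof. by apply: (addrI (D 0)); rewrite -derD !addr0. Qed.

Lemma der1 : D 1 = 0.
Proof.
have := derM 1 1; rewrite !mulr1 mul1r => h.
by apply: (addrI (D 1)); rewrite -h addr0.
Qed.

Lemma der_sum (I : Type) (s : seq I) (F : I -> R) :
  D (\sum_(i <- s) F i) = \sum_(i <- s) D (F i).
Proof. exact: (big_morph D derD der0). Qed.

Lemma derX p k : D (p ^+ k) = k%:R * p ^+ k.-1 * D p.
Proof.
elim: k => [|[|k] IH]; first by rewrite expr0 der1 !mul0r.
  by rewrite expr1 mul1r expr0 mul1r.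
by rewrite exprS derM IH /= exprS !mulrS; ring.
Qed.

End Derivation.

Section DerivationOnGenerators.
Variable D : PR -> PR.
Hypotheses (derD : forall p q, D (p + q) = D p + D q)
           (derM : forall p q, D (p * q) = D p * q + p * D q).
Hypotheses (Dalpha : D valpha = 0) (Dbeta : D vbeta = 0)
           (Du4 : D vu4 = vu1 * vu2) (Du3 : D vu3 = vu1 * vu2)
           (Du1 : D vu1 = vu1 * vu3) (Du2 : D vu2 = vu2 * vu4).

Lemma der_umono a b c d e f :
  D (umono a b c d e f) =
    a%:R * umono a b c.+1 d e f + b%:R * umono a b c d.+1 e f
  + c%:R * umono a.+1 b.+1 c.-1 d e f + d%:R * umono a.+1 b.+1 c d.-1 e f.
Proof.
rewrite /umono !derM !(derX derM) Dalpha Dbeta Du1 Du2 Du3 Du4.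
by case: a => [|a]; case: b => [|b]; rewrite /= ?expr0 ?exprS; ring.
Qed.

Lemma sum_weight_insert1_der (w : seq nat) : uniq w -> 0 \notin w -> (0 < size w)%N ->
  peaks w = (valleys w).+1 ->
  \sum_(j <- iota 0 (size w).+1) weight (insert1 j (map S w)) =
    (valpha * vu4 + vbeta * vu3) * weight w + D (weight w).
Proof.
move=> w_uniq w0 w_gt0 hpv; rewrite sum_weight_insert1 // /weight hpv der_umono /=.
rewrite mulrDl -!mulrA umono_u4 umono_alpha umono_u3 umono_beta.
rewrite !prednK ?lrmaxima_gt0 ?rlmaxima_gt0 //; ring.
Qed.

Lemma sum_weight_perm_wordsS m :
  \sum_(w <- perm_words m.+2) weight w =
    (valpha * vu4 + vbeta * vu3) * \sum_(w <- perm_words m.+1) weight w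
  + D (\sum_(w <- perm_words m.+1) weight w).
Proof.
rewrite perm_wordsS big_allpairs_dep (der_sum derD) mulr_sumr -big_split.
apply: eq_big_seq => w hw; have hpv := peaks_perm_words hw.
rewrite mem_perm_words in hw; have [w_uniq w0 sw] := perm_iotaP hw.
by rewrite -sw sum_weight_insert1_der // sw.
Qed.

End DerivationOnGenerators.

Lemma Pn_weight n : Pn n = \sum_(w <- perm_words n.+1) weight w.
Proof.
rewrite /Pn -big_perm_words; apply: eq_bigr => s _.
by rewrite /weight /umono Vst_perm_word Wst_perm_word rdd_perm_word lda_perm_word
  LRmax_perm_word RLmax_perm_word.
Qed.

Lemma Pn0 : Pn 0 = 1.
Proof. by rewrite Pn_weight big_seq1 /weight /umono /= !expr0 !mulr1. Qed.

Theorem theorem3p1 (D : {mpoly rat[8]} -> {mpoly rat[8]}) :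
  (forall p q, D (p + q) = D p + D q) ->
  (forall c : rat, D c%:MP = 0) ->
  (forall p q, D (p * q) = D p * q + p * D q) ->
  D valpha = 0 -> D vbeta = 0 ->
  D va = valpha * va * vu4 -> D vb = vbeta * vb * vu3 ->
  D vu4 = vu1 * vu2 -> D vu3 = vu1 * vu2 ->
  D vu1 = vu1 * vu3 -> D vu2 = vu2 * vu4 ->
  forall n : nat, iter n D (va * vb) = va * vb * Pn n.
Proof.
move=> derD _ derM Dalpha Dbeta Da Db Du4 Du3 Du1 Du2.
elim=> [|n IH]; first by rewrite /= Pn0 mulr1.
rewrite iterS IH !derM Da Db !Pn_weight.
rewrite (sum_weight_perm_wordsS derD derM Dalpha Dbeta Du4 Du3 Du1 Du2); ring.
Qed.
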